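(* In the triangle $ABC$ with $a=1$ and $b=c=\sqrt{2+\sqrt3}$, the triangle centers $X_5$ and $X_{15}$ coincide.
   Context: $X_n$ denotes the $n$-th triangle center listed in Kimberling's Encyclopedia of Triangle Centers (ETC) ($X_5$ the nine-point center, $X_{15}$ the first isodynamic point), with $a=BC$, $b=CA$, $c=AB$. *)

From Stdlib Require Import Reals.
Open Scope R_scope.

Definition point := (R * R)%type.

Definition pdist (P Q : point) : R :=
  sqrt ((fst P - fst Q)^2 + (snd P - snd Q)^2).

Definition side_a (A B C : point) := pdist B C.
Definition side_b (A B C : point) := pdist C A.
Definition side_c (A B C : point) := pdist A B.

(* Interior angles, via the law of cosines. *)
Definition angA (A B C : point) : R :=
  let a := side_a A B C in let b := side_b A B C in let c := side_c A B C in
  acos ((b^2 + c^2 - a^2) / (2 * b * c)).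
Definition angB (A B C : point) : R :=
  let a := side_a A B C in let b := side_b A B C in let c := side_c A B C in
  acos ((c^2 + a^2 - b^2) / (2 * c * a)).
Definition angC (A B C : point) : R :=
  let a := side_a A B C in let b := side_b A B C in let c := side_c A B C in
  acos ((a^2 + b^2 - c^2) / (2 * a * b)).

(* The point with (unnormalized) barycentric coordinates u : v : w. *)
Definition from_bary (A B C : point) (u v w : R) : point :=
  let s := u + v + w in
  ((u * fst A + v * fst B + w * fst C) / s,
   (u * snd A + v * snd B + w * snd C) / s).

(* X(5), nine-point center: barycentrics a cos(B - C) : b cos(C - A) : c cos(A - B) (ETC). *)
Definition X5 (A B C : point) : point :=
  let a := side_a A B C in let b := side_b A B C in let c := side_c A B C in
  let alpha := angA A B C in let beta := angB A B C in let gamma := angC A B C in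
  from_bary A B C (a * cos (beta - gamma)) (b * cos (gamma - alpha))
                  (c * cos (alpha - beta)).

(* X(15), first isodynamic point: barycentrics
   a sin(A + pi/3) : b sin(B + pi/3) : c sin(C + pi/3) (ETC). *)
Definition X15 (A B C : point) : point :=
  let a := side_a A B C in let b := side_b A B C in let c := side_c A B C in
  let alpha := angA A B C in let beta := angB A B C in let gamma := angC A B C in
  from_bary A B C (a * sin (alpha + PI/3)) (b * sin (beta + PI/3))
                  (c * sin (gamma + PI/3)).

(* The triangle is isosceles with apex angle A = pi/6.  For such a triangle the
   barycentric weights of X(5) and X(15) agree term by term: sin(x + pi/3) =
   cos(x - pi/6), so with A = pi/6 and B = C both lists reduce to
   a : b cos(B - pi/6) : c cos(B - pi/6). *)

From Stdlib Require Import Reals Lra.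
Open Scope R_scope.

Lemma sin_plus_PI3 (x : R) : sin (x + PI/3) = cos (x - PI/6).
Proof.
  rewrite <- cos_shift, <- cos_neg.
  f_equal; field.
Qed.

Lemma X5_eq_X15_of_angles (A B C : point) :
  angA A B C = PI/6 -> angB A B C = angC A B C -> X5 A B C = X15 A B C.
Proof.
  intros hA hBC.
  unfold X5, X15; cbv zeta.
  rewrite hA, hBC, !sin_plus_PI3, !Rminus_diag.
  replace (PI/6 - angC A B C) with (- (angC A B C - PI/6)) by ring.
  now rewrite cos_neg.
Qed.

Lemma angB_eq_angC_isosceles (A B C : point) :
  side_b A B C = side_c A B C -> angB A B C = angC A B C.
Proof.
  intros hbc.
  unfold angB, angC; cbv zeta.
  rewrite hbc.
  f_equal; unfold Rdiv; f_equal; [ring | f_equal; ring].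
Qed.

(* The factor 2 - sqrt 3 is 2 - 2 cos(pi/6), by the law of cosines with b = c. *)
Lemma angA_isosceles_PI6 (A B C : point) :
  side_b A B C = side_c A B C -> side_b A B C <> 0 ->
  side_a A B C ^ 2 = (2 - sqrt 3) * side_b A B C ^ 2 ->
  angA A B C = PI/6.
Proof.
  intros hbc hb0 ha.
  assert (hPI : 0 < PI) by apply PI_RGT_0.
  unfold angA; cbv zeta.
  rewrite <- hbc, ha.
  replace (_ / _) with (cos (PI/6)).
  - apply acos_cos; lra.
  - rewrite cos_PI6. field; exact hb0.
Qed.

Theorem theorem3p3 (A B C : point) :
  pdist B C = 1 ->
  pdist C A = sqrt (2 + sqrt 3) ->
  pdist A B = sqrt (2 + sqrt 3) ->
  X5 A B C = X15 A B C.
Proof.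
  intros ha hb hc.
  assert (hs3 : 0 < sqrt 3) by (apply sqrt_lt_R0; lra).
  assert (hbc : side_b A B C = side_c A B C) by (unfold side_b, side_c; congruence).
  apply X5_eq_X15_of_angles.
  - apply angA_isosceles_PI6; [exact hbc | |].
    + unfold side_b; rewrite hb.
      apply Rgt_not_eq, sqrt_lt_R0; lra.
    + unfold side_a, side_b; rewrite ha, hb, pow2_sqrt by lra.
      replace ((2 - sqrt 3) * (2 + sqrt 3)) with (4 - sqrt 3 ^ 2) by ring.
      rewrite pow2_sqrt by lra; ring.
  - exact (angB_eq_angC_isosceles A B C hbc).
Qed.
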